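(* The Exhaustive-PBS (EPBS) mechanism, which outputs the reported-welfare-maximizing assignment among the collision-free leaves of the fully expanded EPBS search tree and charges VCG-based payments $p_i(\hat\tau)=\sum_{j\neq i}\hat w_j(d^\ast_{-i})-\sum_{j\neq i}\hat w_j(d^\ast)$, where $d^\ast$ and $d^\ast_{-i}$ maximize $\sum_i\hat w_i$ and $\sum_{j\ne i}\hat w_j$ respectively over that set of leaf assignments, is strategyproof: no agent can increase her utility $u_i=w_i(d^\ast)-p_i$ by misreporting her cost $c_i$ or value $v_i$, whatever the other agents report.
   Context: Setting: graph $(V,E)$, agents $i=1,\dots,n$ with types $\tau_i=(s_i,g_i,c_i,v_i)$; only $c_i,v_i$ can be misreported; paths, feasible (vertex- and edge-conflict-free) assignments, and welfare $w_i(d)=\max(0,v_i-c_i|\pi_i^d|)$ as usual; $\hat w_i$ is welfare computed from reports. EPBS search tree: each node holds a strict partial order (priority ordering) on agents and a plan (one path per agent) in which each agent's path is a shortest path from her start to her goal avoiding conflicts with paths of all agents of higher priority. The root has the empty ordering and individually shortest paths. A node whose plan has a conflict is expanded by choosing a conflict between two agents $i,j$ and creating two children, one adding $i\succ j$ and the other $j\succ i$ to the ordering (transitively closed), each replanning paths by single-agent search. All choices (which conflict to branch on, tie-breaking among equal-length paths) are made by a fixed rule using a fixed lexicographic ordering of agents and their start/goal vertices only. The tree is expanded exhaustively until every leaf is conflict-free; the range is the set of assignments in conflict-free leaves. A mechanism is strategyproof if truthful reporting of $(c_i,v_i)$ is a dominant strategy for every agent. *)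

From HB Require Import structures.
From mathcomp Require Import all_boot all_order all_algebra.
Set Implicit Arguments.
Unset Strict Implicit.
Unset Printing Implicit Defensive.
Import Order.TTheory GRing.Theory Num.Theory.
Local Open Scope ring_scope.

Definition step_ok (V : finType) (E : rel V) (a b : V) : bool := (a == b) || E a b.

(* A path is the sequence of vertices occupied at times 0,1,...,|pi|;
   it starts at s and ends at g. *)
Definition valid_path (V : finType) (E : rel V) (s g : V) (p : seq V) : Prop :=
  match p with
  | x :: p' => x = s /\ last x p' = g /\ path (step_ok E) x p'
  | [::] => False
  end.

Definition plen (V : Type) (p : seq V) : nat := (size p).-1.

(* Position at time t of the path x :: p (the agent stays at its goal afterwards). *)
Definition at_time (V : Type) (x : V) (p : seq V) (t : nat) : V :=
  nth (last x p) (x :: p) t.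

Definition conflict (V : finType) (p q : seq V) : Prop :=
  match p, q with
  | x :: p', y :: q' =>
      exists t : nat,
        at_time x p' t = at_time y q' t \/
        (at_time x p' t = at_time y q' t.+1 /\ at_time x p' t.+1 = at_time y q' t)
  | _, _ => False
  end.

Definition plan (V : finType) (n : nat) := 'I_n -> seq V.

Definition conflict_free (V : finType) (n : nat) (d : plan V n) : Prop :=
  forall i j : 'I_n, i != j -> ~ conflict (d i) (d j).

(* o i j means i has higher priority than j (i > j). *)
Definition ordering (n : nat) := rel 'I_n.

Definition empty_ord (n : nat) : ordering n := fun _ _ => false.

Definition add_prio (n : nat) (o : ordering n) (i j : 'I_n) : ordering n :=
  let r : rel 'I_n := fun a b => o a b || ((a == i) && (b == j)) in
  fun a b => [exists c, r a c && connect r c b].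

Definition avoids (V : finType) (E : rel V) (n : nat) (s g : 'I_n -> V)
  (o : ordering n) (d : plan V n) (j : 'I_n) (q : seq V) : Prop :=
  valid_path E (s j) (g j) q /\ (forall i, o i j -> ~ conflict q (d i)).

Definition node_ok (V : finType) (E : rel V) (n : nat) (s g : 'I_n -> V)
  (o : ordering n) (d : plan V n) : Prop :=
  forall j, avoids E s g o d j (d j) /\
            (forall q, avoids E s g o d j q -> plen (d j) <= plen q)%N.

(* The fixed deterministic rule of EPBS is given by:
   - root    : the root plan (individually shortest paths, tie-broken by the rule);
   - choose  : the conflict to branch on (None iff no conflict);
   - replan  : the plan of the child node with the given (extended) ordering,
               computed from the parent's plan by single-agent searches
               (None when the single-agent search fails and the node is pruned).
   None of them has access to the reported costs/values. *)
Definition rules_ok (V : finType) (E : rel V) (n : nat) (s g : 'I_n -> V)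
  (root : plan V n)
  (choose : ordering n -> plan V n -> option ('I_n * 'I_n))
  (replan : ordering n -> plan V n -> option (plan V n)) : Prop :=
  [/\ node_ok E s g (@empty_ord n) root,
      (forall o d i j, choose o d = Some (i, j) -> i != j /\ conflict (d i) (d j)),
      (forall o d, choose o d = None -> conflict_free d) &
      (forall o d d', replan o d = Some d' -> node_ok E s g o d')].

Inductive epbs_node (V : finType) (n : nat) (root : plan V n)
  (choose : ordering n -> plan V n -> option ('I_n * 'I_n))
  (replan : ordering n -> plan V n -> option (plan V n)) :
  ordering n -> plan V n -> Prop :=
| epbs_root : epbs_node root choose replan (@empty_ord n) root
| epbs_child (o : ordering n) (d : plan V n) (i j : 'I_n) (o' : ordering n) (d' : plan V n) :
    epbs_node root choose replan o d ->
    choose o d = Some (i, j) ->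
    (o' = add_prio o i j \/ o' = add_prio o j i) ->
    replan o' d = Some d' ->
    epbs_node root choose replan o' d'.

Definition epbs_range (V : finType) (n : nat) (root : plan V n)
  (choose : ordering n -> plan V n -> option ('I_n * 'I_n))
  (replan : ordering n -> plan V n -> option (plan V n)) (d : plan V n) : Prop :=
  exists o, epbs_node root choose replan o d /\ conflict_free d.

Definition welfare (R : realFieldType) (V : finType) (n : nat)
  (c v : 'I_n -> R) (d : plan V n) (i : 'I_n) : R :=
  Num.max 0 (v i - c i * (plen (d i))%:R).

Definition upd (R : Type) (n : nat) (f : 'I_n -> R) (i : 'I_n) (x : R) : 'I_n -> R :=
  fun j => if j == i then x else f j.

Definition is_argmax (R : realFieldType) (V : finType) (n : nat)
  (range : plan V n -> Prop) (F : plan V n -> R) (d : plan V n) : Prop :=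
  range d /\ forall d', range d' -> F d' <= F d.

Definition payment (R : realFieldType) (V : finType) (n : nat)
  (dstar : ('I_n -> R) -> ('I_n -> R) -> plan V n)
  (dminus : 'I_n -> ('I_n -> R) -> ('I_n -> R) -> plan V n)
  (i : 'I_n) (c v : 'I_n -> R) : R :=
  \sum_(j | j != i) welfare c v (dminus i c v) j
  - \sum_(j | j != i) welfare c v (dstar c v) j.

(* utility of agent i with true type (ci, vi) when reports are (c, v) *)
Definition utility (R : realFieldType) (V : finType) (n : nat)
  (dstar : ('I_n -> R) -> ('I_n -> R) -> plan V n)
  (dminus : 'I_n -> ('I_n -> R) -> ('I_n -> R) -> plan V n)
  (i : 'I_n) (ci vi : R) (c v : 'I_n -> R) : R :=
  Num.max 0 (vi - ci * (plen (dstar c v i))%:R) - payment dstar dminus i c v.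

From HB Require Import structures.
From mathcomp Require Import all_boot all_order all_algebra.
Import Order.TTheory GRing.Theory Num.Theory.
Local Open Scope ring_scope.

(* The EPBS range is built by rules that never see the reported costs and
   values, so it is a fixed set of plans and EPBS with these payments is a
   VCG mechanism on it. Reporting truthfully makes agent i's utility equal to
   the true social welfare of the chosen plan minus the Clarke pivot term
   [\sum_(j != i) w^_j(d*_{-i})], which does not depend on i's report; and the
   truthful outcome maximizes exactly that social welfare over the range. *)

Section Welfare.

Variables (R : realFieldType) (V : finType) (n : nat).
Implicit Types (c v : 'I_n -> R) (d : plan V n).

Lemma welfare_upd_eq c v i x y d :
  welfare (upd c i x) (upd v i y) d i = Num.max 0 (y - x * (plen (d i))%:R).
Proof. by rewrite /welfare /upd eqxx. Qed.

Lemma welfare_upd_neq c v i x y d j : j != i ->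
  welfare (upd c i x) (upd v i y) d j = welfare c v d j.
Proof. by move=> ji; rewrite /welfare /upd (negbTE ji). Qed.

Lemma sum_welfare_upd_others c v i x y d :
  \sum_(j | j != i) welfare (upd c i x) (upd v i y) d j
  = \sum_(j | j != i) welfare c v d j.
Proof. by apply: eq_bigr => j; apply: welfare_upd_neq. Qed.

Lemma sum_welfare_upd c v i x y d :
  \sum_j welfare (upd c i x) (upd v i y) d j
  = Num.max 0 (y - x * (plen (d i))%:R) + \sum_(j | j != i) welfare c v d j.
Proof. by rewrite (bigD1 i) //= welfare_upd_eq sum_welfare_upd_others. Qed.

End Welfare.

Section Argmax.

Variables (R : realFieldType) (V : finType) (n : nat) (range : plan V n -> Prop).
Implicit Types (F G : plan V n -> R) (d : plan V n).

Lemma is_argmax_ext F G d : F =1 G -> is_argmax range F d -> is_argmax range G d.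
Proof. by move=> FG [rd maxd]; split=> // d' rd'; rewrite -!FG; apply: maxd. Qed.

Lemma is_argmax_value_eq F d1 d2 :
  is_argmax range F d1 -> is_argmax range F d2 -> F d1 = F d2.
Proof.
move=> [r1 max1] [r2 max2]; apply/eqP; rewrite eq_le.
by rewrite max1 ?max2.
Qed.

End Argmax.

Theorem mainTheorem3 (V : finType) (E : rel V) (n : nat) (s g : 'I_n -> V)
  (root : plan V n)
  (choose : ordering n -> plan V n -> option ('I_n * 'I_n))
  (replan : ordering n -> plan V n -> option (plan V n))
  (R : realFieldType)
  (dstar : ('I_n -> R) -> ('I_n -> R) -> plan V n)
  (dminus : 'I_n -> ('I_n -> R) -> ('I_n -> R) -> plan V n) :
  rules_ok E s g root choose replan ->
  (forall c v : 'I_n -> R,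
     is_argmax (epbs_range root choose replan)
       (fun d => \sum_i welfare c v d i) (dstar c v)) ->
  (forall (i : 'I_n) (c v : 'I_n -> R),
     is_argmax (epbs_range root choose replan)
       (fun d => \sum_(j | j != i) welfare c v d j) (dminus i c v)) ->
  forall (i : 'I_n) (ci vi : R) (chat vhat : 'I_n -> R),
    utility dstar dminus i ci vi chat vhat
    <= utility dstar dminus i ci vi (upd chat i ci) (upd vhat i vi).
Proof.
move=> _ dstar_max dminus_max i ci vi chat vhat.
set c' := upd chat i ci; set v' := upd vhat i vi.
have pivot_eq : \sum_(j | j != i) welfare c' v' (dminus i c' v') j
              = \sum_(j | j != i) welfare chat vhat (dminus i chat vhat) j.
  rewrite sum_welfare_upd_others.
  apply: is_argmax_value_eq (dminus_max i chat vhat).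
  apply: is_argmax_ext (dminus_max i c' v') => d.
  exact: sum_welfare_upd_others.
have [_ truth_max] := dstar_max c' v'.
have [lie_in_range _] := dstar_max chat vhat.
have := truth_max _ lie_in_range.
rewrite !sum_welfare_upd /utility /payment pivot_eq sum_welfare_upd_others.
by rewrite !opprB !addrA lerD2r.
Qed.
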